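(* Let $T$ be a string of length $n$ and $1<i\le j\le n$. For each $[s,t]\in\mathsf{MUS}(T[i-1..j])$ with $s\ne i-1$, if $[s,t]\notin\mathsf{MUS}(T[i..j])$ then $\#\mathit{occ}_{T[i-1..j]}(\mathit{sqp}_{i-1,j})=2$ and $\mathit{sqp}_{i-1,j}$ is a proper substring of $T[s..t]$.
   Context: $T[a..b]$ denotes the substring of $T$ from position $a$ to $b$. For strings $S,w$, $\#\mathit{occ}_S(w)$ is the number of positions at which $w$ occurs in $S$, with $\#\mathit{occ}_S(\varepsilon)=|S|+1$. A substring $w$ of $S$ is unique in $S$ if $\#\mathit{occ}_S(w)=1$ and repeating if $\#\mathit{occ}_S(w)\ge 2$. For $1\le i\le j\le n$, $\mathsf{MUS}(T[i..j])$ is the set of intervals $[s,t]$ (positions in $T$) with $i\le s\le t\le j$ such that $T[s..t]$ is unique in $T[i..j]$ and every proper substring of $T[s..t]$ (including the empty string) is repeating in $T[i..j]$. $\mathit{sqp}_{i,j}$ is the shortest (non-empty) prefix of $T[i..j]$ that occurs at most twice in $T[i..j]$. *)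

From mathcomp Require Import all_boot.
Set Implicit Arguments. Unset Strict Implicit. Unset Printing Implicit Defensive.

Section Strings.
Variable A : eqType.

(* T[a..b], with 1-based inclusive positions; empty if b < a. *)
Definition substr (T : seq A) (a b : nat) : seq A :=
  take (b.+1 - a) (drop a.-1 T).

(* #occ_S(w): number of positions p (0-based) at which w occurs in S.
   For w = [::] this is size S + 1. *)
Definition occ (S w : seq A) : nat :=
  count (fun p => take (size w) (drop p S) == w) (iota 0 (size S - size w).+1).

Definition unique_in (S w : seq A) : Prop := occ S w = 1.
Definition repeating_in (S w : seq A) : Prop := 2 <= occ S w.

Definition proper_substring (w x : seq A) : Prop := infix w x /\ w != x.

Definition in_MUS (T : seq A) (i j s t : nat) : Prop :=
  [/\ i <= s, s <= t, t <= j,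
      unique_in (substr T i j) (substr T s t) &
      forall w, proper_substring w (substr T s t) -> repeating_in (substr T i j) w].

(* sqp_{i,j}: shortest non-empty prefix of T[i..j] occurring at most twice in T[i..j]
   (it exists whenever i <= j, since T[i..j] itself occurs once). *)
Definition sqp_of (S : seq A) : seq A :=
  take (find (fun k => occ S (take k.+1 S) <= 2) (iota 0 (size S))).+1 S.

Definition sqp (T : seq A) (i j : nat) : seq A := sqp_of (substr T i j).

End Strings.

(* Write S = T[i..j], so that T[i-1..j] = c :: S. Since s >= i, the string w = T[s..t]
   is a factor of S, still unique there; as [s,t] is not a MUS of S, some proper factor u
   of w occurs at most once in S although it occurs at least twice in c :: S. The only
   extra occurrence can be at position 0, so u is a prefix of c :: S occurring exactly
   twice. Hence the shortest prefix occurring at most twice is a prefix of u, and since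
   occurrences can only increase when passing to a prefix, it also occurs exactly twice
   and is a proper factor of w. *)

From mathcomp Require Import all_boot.
From mathcomp Require Import zify.
From Stdlib Require Import Classical.
Set Implicit Arguments. Unset Strict Implicit.

Section Occurrences.
Variable A : eqType.
Implicit Types (c : A) (S u v w : seq A).

Lemma occE S w :
  occ S w = count (fun p => take (size w) (drop p S) == w) (iota 0 (size S).+1).
Proof.
rewrite /occ.
have -> : (size S).+1 = (size S - size w).+1 + (size S - (size S - size w)) by lia.
rewrite iotaD count_cat [X in _ = _ + X](@eq_in_count _ _ pred0).
  by rewrite count_pred0 addn0.
move=> p; rewrite mem_iota /= => /andP [lo hi].
apply/negbTE/eqP => /(congr1 size); rewrite size_take_min size_drop; lia.
Qed.

Lemma occ_cons c S w : occ (c :: S) w = prefix w (c :: S) + occ S w.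
Proof.
rewrite prefixE [LHS]occE [occ S w]occE.
have -> : iota 0 (size (c :: S)).+1 = 0 :: iota (1 + 0) (size S).+1 by [].
by rewrite iotaDl [count _ (_ :: _)]/= count_map.
Qed.

Lemma occ_nil S : occ S [::] = (size S).+1.
Proof.
by rewrite occE (@eq_count _ _ predT) ?count_predT ?size_iota // => p; rewrite take0.
Qed.

Lemma occ_gt0 S w : infix w S -> 0 < occ S w.
Proof.
move=> /infixP [s1 [s2 ->]]; rewrite occE -has_count; apply/hasP.
exists (size s1); first by rewrite mem_iota !size_cat /=; lia.
by rewrite drop_size_cat // take_size_cat.
Qed.

Lemma occ_prefix S u v : prefix v u -> occ S u <= occ S v.
Proof.
move=> pre_vu; rewrite !occE; apply: sub_count => p /= /eqP occ_u.
by rewrite -(take_takel _ (size_prefix pre_vu)) occ_u -prefixE.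
Qed.

Lemma unique_in_cons c S w : infix w S -> unique_in (c :: S) w -> unique_in S w.
Proof. by move=> /occ_gt0 pos; rewrite /unique_in occ_cons; lia. Qed.

Lemma repeating_cons_prefix c S u :
  repeating_in (c :: S) u -> ~ repeating_in S u ->
  prefix u (c :: S) /\ occ (c :: S) u = 2.
Proof.
rewrite /repeating_in !occ_cons.
by case: (prefix u (c :: S)) => /=; lia.
Qed.

Lemma proper_substring_size u w : proper_substring u w -> size u < size w.
Proof.
move=> [/infixW sub_uw ne_uw].
by rewrite ltn_neqAle (size_subseq_leqif sub_uw) ne_uw size_subseq.
Qed.

Lemma proper_substring_prefix u v w :
  prefix v u -> proper_substring u w -> proper_substring v w.
Proof.
move=> pre_vu pu_w; have [inf_uw _] := pu_w; split.
  exact: infix_trans (prefixW pre_vu) inf_uw.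
apply/eqP => eq_vw; have := proper_substring_size pu_w.
by rewrite -eq_vw ltnNge size_prefix.
Qed.

End Occurrences.

Section SqpOf.
Variable A : eqType.
Implicit Types (S u : seq A).

Lemma sqp_of_minimal S u :
  0 < size u -> prefix u S -> occ S u <= 2 ->
  prefix (sqp_of S) u /\ occ S (sqp_of S) <= 2.
Proof.
move=> u_gt0 pre_uS occ_u; rewrite /sqp_of.
set P := fun k => occ S (take k.+1 S) <= 2.
set k := find P (iota 0 (size S)).
have le_uS := size_prefix pre_uS.
have take_u : take (size u) S = u by apply/eqP; rewrite -prefixE.
have Pu : P (size u).-1 by rewrite /P prednK // take_u.
have has_P : has P (iota 0 (size S)).
  by apply/hasP; exists (size u).-1; rewrite ?mem_iota; lia.
have lt_kS : k < size S by rewrite -[size S](size_iota 0) -has_find.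
have Pk : P k by have := nth_find 0 has_P; rewrite nth_iota.
have le_ku : k < size u.
  rewrite ltnNge; apply/negP => le_uk.
  have lt_uk : (size u).-1 < k by lia.
  by have := before_find 0 lt_uk; rewrite nth_iota ?Pu //; lia.
split=> //; rewrite prefixE size_take_min (minn_idPl lt_kS).
by rewrite -{1}take_u take_takel.
Qed.

End SqpOf.

Section Substrings.
Variable A : eqType.
Implicit Types (T : seq A).

Lemma substr_pred_cons T i j :
  1 < i -> i <= j.+1 -> i <= size T -> exists c, substr T i.-1 j = c :: substr T i j.
Proof.
case: T => [|x0 T'] lt1i le_ij le_iT; first by rewrite /= in le_iT; lia.
rewrite /substr (drop_nth x0); last by lia.
have -> : j.+1 - i.-1 = (j.+1 - i).+1 by lia.
have -> : i.-2.+1 = i.-1 by lia.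
by exists (nth x0 (x0 :: T') i.-2).
Qed.

Lemma substr_infix T i j s t :
  0 < i -> i <= s -> s <= t -> t <= j -> infix (substr T s t) (substr T i j).
Proof.
move=> i_gt0 le_is le_st le_tj; rewrite /substr.
have -> : drop s.-1 T = drop (s - i) (drop i.-1 T) by rewrite drop_drop; congr drop; lia.
have -> : j.+1 - i = (s - i) + (j.+1 - s) by lia.
rewrite takeD; apply: infix_catl.
rewrite -(@take_takel _ (t.+1 - s) (j.+1 - s)); last by lia.
exact: infix_take.
Qed.

End Substrings.

Theorem lemma18 (A : eqType) (T : seq A) (i j : nat) :
  1 < i -> i <= j -> j <= size T ->
  forall s t : nat,
    in_MUS T i.-1 j s t -> s <> i.-1 -> ~ in_MUS T i j s t ->
    occ (substr T i.-1 j) (sqp T i.-1 j) = 2 /\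
    proper_substring (sqp T i.-1 j) (substr T s t).
Proof.
move=> lt1i le_ij le_jT s t [le_pred_s le_st le_tj uniq_w minimal_w] ne_s notMUS.
have le_is : i <= s by lia.
have [c Ec] : exists c, substr T i.-1 j = c :: substr T i j.
  by apply: substr_pred_cons; lia.
rewrite /sqp Ec in uniq_w minimal_w *.
set S := substr T i j in uniq_w minimal_w notMUS *.
set w := substr T s t in uniq_w minimal_w notMUS *.
have w_infix : infix w S by apply: substr_infix; lia.
have [u [pu_w nrep_u]] : exists u, proper_substring u w /\ ~ repeating_in S u.
  apply: NNPP => none; apply: notMUS; split=> //.
    exact: unique_in_cons w_infix uniq_w.
  by move=> u pu_w; apply: NNPP => nrep_u; apply: none; exists u.
have [pre_u occ_u] := repeating_cons_prefix (minimal_w u pu_w) nrep_u.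
have u_gt0 : 0 < size u.
  have := proper_substring_size pu_w; have := size_infix w_infix.
  by case: u pu_w nrep_u {pre_u occ_u} => // _; rewrite /repeating_in occ_nil /=; lia.
have [pre_sqp occ_sqp] := sqp_of_minimal u_gt0 pre_u (eq_leq occ_u).
split; last exact: proper_substring_prefix pu_w.
by apply/eqP; rewrite eqn_leq occ_sqp -{1}occ_u occ_prefix.
Qed.
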